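(* Let $\mathcal{D}=\mathcal{P}_{\mathcal{D}}\cup\mathcal{L}_{\mathcal{D}}$ be a minimal dominating set of the incidence graph of an arbitrary projective plane $\Pi_q$ of order $q$ with $|\mathcal{D}|<3q-1$. Suppose there is a point $P$ such that $|[P]\cap\mathcal{L}_{\mathcal{D}}|=q$, and let $\ell$ be the unique line of $[P]\setminus\mathcal{L}_{\mathcal{D}}$. Then $\mathcal{L}_{\mathcal{D}}=[P]\setminus\{\ell\}$ and $\mathcal{P}_{\mathcal{D}}$ is the set of points of $\ell$ other than $P$; hence $|\mathcal{D}|=2q$ and $\mathcal{D}$ is stable.
   Context: A dominating set $\mathcal{D}=\mathcal{P}_{\mathcal{D}}\cup\mathcal{L}_{\mathcal{D}}$ of the incidence graph of $\Pi_q$ is a set of points $\mathcal{P}_{\mathcal{D}}$ and lines $\mathcal{L}_{\mathcal{D}}$ such that every point not in $\mathcal{P}_{\mathcal{D}}$ lies on a line of $\mathcal{L}_{\mathcal{D}}$ and every line not in $\mathcal{L}_{\mathcal{D}}$ contains a point of $\mathcal{P}_{\mathcal{D}}$; minimal means no proper subset is dominating. $\mathcal{D}$ is stable if it is minimal and there is no dominating set $\mathcal{D}'\supset\mathcal{D}$ with $|\mathcal{D}'|=|\mathcal{D}|+1$ that contains a dominating set of size less than $|\mathcal{D}|$. $[P]$ is the set of lines through the point $P$. *)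

From mathcomp Require Import all_boot.
Set Implicit Arguments. Unset Strict Implicit. Unset Printing Implicit Defensive.

Definition projective_plane (Pt Ln : finType) (I : Pt -> Ln -> bool) (q : nat) : Prop :=
  (forall p1 p2 : Pt, p1 != p2 -> #|[set l | I p1 l && I p2 l]| = 1) /\
  (forall l1 l2 : Ln, l1 != l2 -> #|[set p | I p l1 && I p l2]| = 1) /\
  (exists a b c d : Pt, uniq [:: a; b; c; d] /\
     forall l : Ln, (I a l + I b l + I c l + I d l <= 2)%N) /\
  (forall l : Ln, #|[set p | I p l]| = q.+1).

(* Vertices of the incidence graph: points (inl) and lines (inr). *)
Definition inc_adj (Pt Ln : finType) (I : Pt -> Ln -> bool) (x y : Pt + Ln) : bool :=
  match x, y with
  | inl p, inr l => I p l
  | inr l, inl p => I p l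
  | _, _ => false
  end.

Definition dominating (Pt Ln : finType) (I : Pt -> Ln -> bool) (D : {set Pt + Ln}) : Prop :=
  forall v : Pt + Ln, v \notin D -> exists2 u, u \in D & inc_adj I u v.

Definition minimal_dominating (Pt Ln : finType) (I : Pt -> Ln -> bool) (D : {set Pt + Ln}) : Prop :=
  dominating I D /\ forall D' : {set Pt + Ln}, D' \proper D -> ~ dominating I D'.

Definition stable_dominating (Pt Ln : finType) (I : Pt -> Ln -> bool) (D : {set Pt + Ln}) : Prop :=
  minimal_dominating I D /\
  ~ (exists D' : {set Pt + Ln},
       [/\ D \subset D', #|D'| = #|D|.+1, dominating I D' &
           exists D'' : {set Pt + Ln},
             [/\ D'' \subset D', dominating I D'' & #|D''| < #|D| ]]).

Definition pts_of (Pt Ln : finType) (D : {set Pt + Ln}) : {set Pt} := [set p | inl p \in D].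
Definition lns_of (Pt Ln : finType) (D : {set Pt + Ln}) : {set Ln} := [set l | inr l \in D].
Definition pencil (Pt Ln : finType) (I : Pt -> Ln -> bool) (P : Pt) : {set Ln} := [set l | I P l].

From mathcomp Require Import all_boot zify.
Set Implicit Arguments. Unset Strict Implicit. Unset Printing Implicit Defensive.

(* If a point Q of ell other than P were missing from D, then D would contain
   three disjoint families of vertices: the q lines through P other than ell,
   a dominator of each of the q lines through Q other than ell (the line itself
   or a point off ell), and a dominator of each of the q - 1 other points of ell
   minus P (the point itself or a line through neither P nor Q); so
   |D| >= 3q - 1.  Hence D contains the points of ell minus P and the lines
   through P minus ell, which already dominate, and minimality gives equality.
   For stability, a dominating subset of D + w has at least |D| elements:
   dropping a line through P leaves q >= 2 points on it that only w could
   dominate, and dropping two points of ell forces w = ell, after which the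
   other lines through a dropped point are undominated. *)


Lemma leq_card_rel (T U : finType) (A : {set T}) (B : {set U}) (R : T -> U -> bool) :
  (forall x, x \in A -> exists2 y, y \in B & R x y) ->
  (forall x x' y, x \in A -> x' \in A -> y \in B -> R x y -> R x' y -> x = x') ->
  #|A| <= #|B|.
Proof.
move=> Rtotal Rinj; pose f x := [pick y in B | R x y].
have fP x : x \in A -> exists2 y, f x = Some y & (y \in B) && R x y.
  move=> xA; rewrite /f; case: pickP => [y|noR]; first by exists y.
  by case: (Rtotal x xA) => y yB Rxy; move: (noR y); rewrite yB Rxy.
have <- : #|f @: A| = #|A|.
  apply: card_in_imset => x x' xA x'A.
  case: (fP x xA) (fP x' x'A) => y -> /andP[yB Rxy] [y' -> /andP[_ Rx'y']] [eq_yy'].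
  by rewrite -eq_yy' in Rx'y'; exact: Rinj Rxy Rx'y'.
rewrite -(card_imset (mem B) (@Some_inj _)).
apply/subset_leq_card/subsetP => _ /imsetP[x xA ->].
by case: (fP x xA) => y -> /andP[yB _]; exact: imset_f.
Qed.

Lemma subset_card_succ (T : finType) (A B : {set T}) :
  A \subset B -> #|B| = #|A|.+1 -> exists2 w, w \notin A & B = w |: A.
Proof.
move=> sAB cardB; have /cards1P[w BAw] : #|B :\: A| == 1.
  by rewrite cardsD (setIidPr sAB) cardB subSnn.
have wBA : w \in B :\: A by rewrite BAw set11.
exists w; first by case/setDP: wBA.
rewrite -BAw; apply/setP => x; rewrite !inE.
by case: (boolP (x \in A)) => [/(subsetP sAB) ->|]; rewrite ?orbT ?andbT ?orbF.
Qed.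

Lemma leq_card_setI_disjoint3 (T : finType) (D A B C : {set T}) :
  [disjoint A & B] -> [disjoint A & C] -> [disjoint B & C] ->
  #|D :&: A| + #|D :&: B| + #|D :&: C| <= #|D|.
Proof.
move=> dAB dAC dBC; set A' := D :&: A; set B' := D :&: B; set C' := D :&: C.
have dW (X Y : {set T}) : [disjoint X & Y] -> [disjoint D :&: X & D :&: Y].
  by apply: disjointW; apply: subsetIr.
have /subset_leq_card : A' :|: B' :|: C' \subset D by rewrite !subUset !subsetIl.
apply: leq_trans.
have /eqP -> : #|A' :|: B' :|: C'| == #|A' :|: B'| + #|C'|.
  by rewrite (leq_card_setU _ _).2 -setI_eq0 setIUl setU_eq0 !setI_eq0 !dW.
by have /eqP -> : #|A' :|: B'| == #|A'| + #|B'| by rewrite (leq_card_setU _ _).2 dW.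
Qed.

Lemma cards1_pred (T : finType) (p : pred T) :
  #|[set x | p x]| = 1 -> exists x, forall y, p y = (y == x).
Proof. by move/eqP/cards1P=> [x px]; exists x => y; rewrite -in_set1 -px inE. Qed.

Section IncidenceGraph.

Variables (Pt Ln : finType) (I : Pt -> Ln -> bool).
Implicit Types (S : {set Pt}) (L : {set Ln}) (D : {set Pt + Ln}).

Definition vset S L : {set Pt + Ln} := inl @: S :|: inr @: L.

Lemma inl_vset S L p : (inl p \in vset S L) = (p \in S).
Proof.
rewrite inE (mem_imset _ _ (@inl_inj _ _)).
by case: (boolP (_ \in inr @: _)) => [/imsetP[]|]; rewrite ?orbF.
Qed.

Lemma inr_vset S L l : (inr l \in vset S L) = (l \in L).
Proof.
rewrite inE (mem_imset _ _ (@inr_inj _ _)).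
by case: (boolP (_ \in inl @: _)) => [/imsetP[]|].
Qed.

Lemma card_vset S L : #|vset S L| = #|S| + #|L|.
Proof.
rewrite cardsU !card_imset; try by move=> ? ? [].
suff -> : inl @: S :&: inr @: L = set0 by rewrite cards0 subn0.
by apply/setP => v; rewrite !inE; apply/andP => -[/imsetP[p _ ->] /imsetP[]].
Qed.

Lemma pts_of_vset S L : pts_of (vset S L) = S.
Proof. by apply/setP => p; rewrite inE inl_vset. Qed.

Lemma lns_of_vset S L : lns_of (vset S L) = L.
Proof. by apply/setP => l; rewrite inE inr_vset. Qed.

Lemma vsetS S1 L1 S2 L2 : S1 \subset S2 -> L1 \subset L2 -> vset S1 L1 \subset vset S2 L2.
Proof. by move=> sS sL; apply: setUSS; apply: imsetS. Qed.

Lemma vset_pts_lns D : vset (pts_of D) (lns_of D) = D.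
Proof. by apply/setP => -[p|l]; rewrite ?inl_vset ?inr_vset inE. Qed.

Lemma disjoint_vset S1 L1 S2 L2 :
  [disjoint S1 & S2] -> [disjoint L1 & L2] -> [disjoint vset S1 L1 & vset S2 L2].
Proof.
rewrite -!setI_eq0 => /eqP dS /eqP dL; apply/eqP/setP => -[p|l].
  by rewrite in_setI !inl_vset -in_setI dS !inE.
by rewrite in_setI !inr_vset -in_setI dL !inE.
Qed.

Definition dominates (u v : Pt + Ln) := (u == v) || inc_adj I u v.

Lemma dominatingP D : dominating I D -> forall v, exists2 u, u \in D & dominates u v.
Proof.
move=> domD v; case: (boolP (v \in D)) => [vD|/domD[u uD adj]].
  by exists v; rewrite // /dominates eqxx.
by exists u; rewrite // /dominates adj orbT.
Qed.

Lemma minimal_dominating_eq D0 D :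
  minimal_dominating I D -> D0 \subset D -> dominating I D0 -> D0 = D.
Proof.
case=> _ minD sD0D domD0; apply/eqP; apply: contraT => neD0D.
by case: (minD D0); rewrite // properEneq neD0D.
Qed.

Lemma stable_dominating_ext D :
  minimal_dominating I D ->
  (forall w D'', w \notin D -> D'' \subset w |: D -> dominating I D'' -> #|D| <= #|D''|) ->
  stable_dominating I D.
Proof.
move=> minD extD; split=> // -[D' [sDD' cardD' _ [D'' [sD''D' domD'' ltD'']]]].
case: (subset_card_succ sDD' cardD') => w wD defD'.
by move: ltD''; rewrite ltnNge (extD w) // -defD'.
Qed.

End IncidenceGraph.

Section ProjectivePlane.

Variables (Pt Ln : finType) (I : Pt -> Ln -> bool) (q : nat).
Hypothesis pp : projective_plane I q.

Lemma line_uniq p p' l l' : p != p' -> I p l -> I p' l -> I p l' -> I p' l' -> l = l'.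
Proof.
have [join _] := pp; move=> /join/cards1_pred[m mE] pl p'l pl' p'l'.
have onm y : I p y -> I p' y -> y = m by move=> py p'y; apply/eqP; rewrite -mE py.
by rewrite (onm l pl p'l) (onm l' pl' p'l').
Qed.

Lemma point_uniq p p' l l' : l != l' -> I p l -> I p l' -> I p' l -> I p' l' -> p = p'.
Proof.
have [_ [meet _]] := pp; move=> /meet/cards1_pred[x xE] pl pl' p'l p'l'.
have onx y : I y l -> I y l' -> y = x by move=> yl yl'; apply/eqP; rewrite -xE yl.
by rewrite (onx p pl pl') (onx p' p'l p'l').
Qed.

Lemma exists_line p p' : p != p' -> exists l, I p l && I p' l.
Proof.
have [join _] := pp; move=> /join/cards1_pred[m mE].
by exists m; rewrite mE.
Qed.

Lemma exists_point l l' : l != l' -> exists p, I p l && I p l'.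
Proof.
have [_ [meet _]] := pp; move=> /meet/cards1_pred[x xE].
by exists x; rewrite xE.
Qed.

Lemma exists_line_off p : exists l, ~~ I p l.
Proof.
have [_ [_ [[a [b [c [d [abcd_uniq no3]]]]] _]]] := pp.
move: abcd_uniq; rewrite /= !inE !negb_or => /and4P[/and3P[ab ac _] /andP[bc _] _ _].
have not_abc m : I a m -> I b m -> I c m -> False.
  by move=> am bm cm; move: (no3 m); rewrite am bm cm; case: (I d m).
case: (eqVneq p a) => [->|pa].
  have [m /andP[bm cm]] := exists_line bc.
  by exists m; apply/negP => am; exact: not_abc am bm cm.
have [m1 /andP[am1 bm1]] := exists_line ab; have [m2 /andP[am2 cm2]] := exists_line ac.
case: (boolP (I p m1)) => [pm1|]; last by exists m1.
case: (boolP (I p m2)) => [pm2|]; last by exists m2.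
have m12 : m1 = m2 by exact: line_uniq pa pm1 am1 pm2 am2.
by case: (not_abc m1); rewrite // m12.
Qed.

Lemma card_pencil p : #|pencil I p| = q.+1.
Proof.
have [_ [_ [_ card_line]]] := pp; have [m pm] := exists_line_off p.
apply/eqP; rewrite -(card_line m) eqn_leq; apply/andP; split.
- apply: (@leq_card_rel _ _ _ _ (fun l x => I x l)).
  + move=> l; rewrite inE => pl.
    have lm : l != m by apply: contraNneq pm => <-.
    by have [x /andP[xl xm]] := exists_point lm; exists x; rewrite ?inE.
  + move=> l l' x; rewrite !inE => pl pl' xm xl xl'.
    by apply: line_uniq pl xl pl' xl'; apply: contraNneq pm => ->.
- apply: (@leq_card_rel _ _ _ _ (fun x l => I x l)).
  + move=> x; rewrite inE => xm.
    have xp : x != p by apply: contraNneq pm => <-.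
    by have [l /andP[xl pl]] := exists_line xp; exists l; rewrite ?inE.
  + move=> x x' l; rewrite !inE => xm x'm pl xl x'l.
    by apply: point_uniq xl xm x'l x'm; apply: contraNneq pm => <-.
Qed.

Lemma card_lineD1 p l : I p l -> #|[set x | I x l] :\ p| = q.
Proof.
have [_ [_ [_ card_line]]] := pp.
by move=> pl; move: (card_line l); rewrite (cardsD1 p) inE pl => -[].
Qed.

Lemma card_pencilD1 p l : I p l -> #|pencil I p :\ l| = q.
Proof. by move=> pl; move: (card_pencil p); rewrite (cardsD1 l) inE pl => -[]. Qed.

Lemma card_pencil_dominators D Q ell :
  dominating I D -> inl Q \notin D -> I Q ell ->
  q <= #|D :&: vset [set x | ~~ I x ell] (pencil I Q :\ ell)|.
Proof.
move=> domD QD Qell; rewrite -(card_pencilD1 Qell).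
apply: (@leq_card_rel _ _ _ _ (fun n v => dominates I v (inr n))).
- move=> n; rewrite !inE => /andP[nell Qn].
  have [[e|m] uD] := dominatingP domD (inr n); rewrite /dominates /= => un.
    exists (inl e); rewrite // in_setI uD inl_vset inE.
    apply: contra QD => eell; suff <- : e = Q by [].
    exact: point_uniq nell un eell Qn Qell.
  move: un; rewrite orbF => /eqP[mn]; rewrite mn in uD.
  by exists (inr n); rewrite /dominates ?eqxx // in_setI uD inr_vset !inE nell.
- move=> n n' [e|m]; rewrite !in_setI ?inl_vset ?inr_vset /dominates /= !inE.
    move=> /andP[_ Qn] /andP[_ Qn'] /andP[_ eell] en en'.
    by apply: line_uniq en Qn en' Qn'; apply: contraNneq eell => ->.
  by move=> _ _ _; rewrite !orbF => /eqP[<-] /eqP[<-].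
Qed.

Section Pencil.

Variables (P : Pt) (ell : Ln).
Hypothesis P_ell : I P ell.

Local Notation S := ([set x | I x ell] :\ P).
Local Notation L := (pencil I P :\ ell).

Lemma off_pencil X l : X != P -> I X ell -> I P l -> l != ell -> ~~ I X l.
Proof. by move=> XP Xell Pl; apply: contra_neqN => Xl; exact: line_uniq XP Xl Pl Xell P_ell. Qed.

Lemma vset_dominating : 0 < q -> dominating I (vset S L).
Proof.
move=> q_gt0 [X|n]; rewrite ?inl_vset ?inr_vset !inE => notin.
- case: (eqVneq X P) => [->|XP].
    have /card_gt0P[l lL] : 0 < #|L| by rewrite card_pencilD1.
    by exists (inr l); rewrite ?inr_vset //; move: lL; rewrite !inE => /andP[].
  have [l /andP[Xl Pl]] := exists_line XP.
  have lell : l != ell by apply: contraNneq notin => <-; rewrite XP.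
  by exists (inr l); rewrite ?inr_vset ?inE ?lell.
- case: (boolP (I P n)) => Pn.
    have ->: n = ell by apply/eqP; move: notin; rewrite Pn andbT negbK.
    have /card_gt0P[Y YS] : 0 < #|S| by rewrite card_lineD1.
    by exists (inl Y); rewrite ?inl_vset //; move: YS; rewrite !inE => /andP[].
  have nell : n != ell by apply: contraNneq Pn => ->.
  have [X /andP[Xn Xell]] := exists_point nell.
  have XP : X != P by apply: contraNneq Pn => <-.
  by exists (inl X); rewrite ?inl_vset ?inE ?XP.
Qed.

Lemma card_line_dominators D Q :
  dominating I D -> inr ell \notin D -> Q \in S ->
  q.-1 <= #|D :&: vset S [set m | ~~ I P m && ~~ I Q m]|.
Proof.
move=> domD ellD QS; have /andP[QP Qell] : (Q != P) && I Q ell by rewrite !inE in QS.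
have -> : q.-1 = #|S :\ Q| by rewrite -(card_lineD1 P_ell) (cardsD1 Q) QS.
apply: (@leq_card_rel _ _ _ _ (fun X v => dominates I v (inl X))).
- move=> X; rewrite !inE => /andP[XQ /andP[XP Xell]].
  have [[Y|m] uD] := dominatingP domD (inl X); rewrite /dominates /= ?orbF => uX.
    case/eqP: uX uD => -> XD.
    by exists (inl X); rewrite ?eqxx // in_setI XD inl_vset !inE XP Xell.
  have mell : m != ell by apply: contraNneq ellD => <-.
  have off Z : Z != X -> I Z ell -> ~~ I Z m.
    move=> ZX Zell; apply: contra mell => Zm; apply/eqP.
    exact: line_uniq ZX Zm uX Zell Xell.
  by exists (inr m); rewrite // in_setI uD inr_vset inE !off // eq_sym.
- move=> X X' [Y|m]; rewrite !in_setI ?inl_vset ?inr_vset /dominates /= !inE ?orbF.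
    by move=> _ _ _ /eqP[<-] /eqP[<-].
  move=> /andP[_ /andP[_ Xell]] /andP[_ /andP[_ X'ell]] /andP[_ /andP[Pm _]] Xm X'm.
  by apply: (point_uniq _ Xm Xell X'm X'ell); apply: contraNneq Pm => ->.
Qed.

Lemma leq_card_dominating_missing_pt D Q :
  dominating I D -> inr ell \notin D -> L \subset lns_of D -> Q \in S -> inl Q \notin D ->
  3 * q - 1 <= #|D|.
Proof.
move=> domD ellD LD QS QD; have /andP[QP Qell] : (Q != P) && I Q ell by rewrite !inE in QS.
pose X1 := vset [set x | ~~ I x ell] (pencil I Q :\ ell).
pose X2 := vset S [set m | ~~ I P m && ~~ I Q m].
pose X3 := vset (set0 : {set Pt}) L.
have d12 : [disjoint X1 & X2].
  apply: disjoint_vset; rewrite -setI_eq0; apply/eqP/setP => x; rewrite !inE.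
    by case: (I x ell); rewrite ?andbF.
  by case: (I Q x); rewrite ?andbF.
have d13 : [disjoint X1 & X3].
  apply: disjoint_vset; rewrite -setI_eq0 ?setI0 //; apply/eqP/setP => m; rewrite !inE.
  case: (eqVneq m ell) => //= mell; case: (boolP (I P m)) => Pm; last by rewrite andbF.
  by rewrite (negbTE (off_pencil QP Qell Pm mell)).
have d23 : [disjoint X2 & X3].
  apply: disjoint_vset; rewrite -setI_eq0 ?setI0 //; apply/eqP/setP => m; rewrite !inE.
  by case: (I P m); rewrite ?andbF.
have cardX3 : #|D :&: X3| = q.
  rewrite (setIidPr _) ?card_vset ?cards0 ?card_pencilD1 //.
  apply/subsetP => -[x|l]; rewrite ?inl_vset ?inr_vset; first by rewrite inE.
  by move/(subsetP LD); rewrite inE.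
have := leq_card_setI_disjoint3 D d12 d13 d23; rewrite cardX3.
have := card_pencil_dominators domD QD Qell; have := card_line_dominators domD ellD QS.
rewrite -/X1 -/X2; lia.
Qed.

Section ExtendedDominatingSet.

Variables (w : Pt + Ln) (D : {set Pt + Ln}).
Hypotheses (sDw : D \subset w |: vset S L) (domD : dominating I D).

Lemma pencil_sub_dominating_ext : 1 < q -> L \subset lns_of D.
Proof.
move=> q_gt1; apply/subsetP => l lL; rewrite inE; apply: contraT => lD.
have /andP[lell Pl] : (l != ell) && I P l by rewrite !inE in lL.
have dom_by_w X : X \in [set x | I x l] :\ P -> (w \in D) && dominates I w (inl X).
  rewrite !inE => /andP[XP Xl]; have [u uD uX] := dominatingP domD (inl X).
  have /setU1P[<-|uSL] := subsetP sDw u uD; first by rewrite uD.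
  move: uSL uX; case: u uD => [Y|m] uD; rewrite ?inl_vset ?inr_vset !inE /dominates /= ?orbF.
    move=> /andP[_ Yell] /eqP[YX]; rewrite YX in Yell.
    by move: Xl; rewrite (negbTE (off_pencil XP Yell Pl lell)).
  move=> /andP[_ Pm] Xm; have ml : m = l by exact: line_uniq XP Xm Pm Xl Pl.
  by move: lD; rewrite -ml uD.
have /card_gt1P[X1 [X2 [X1l X2l X12]]] : 1 < #|[set x | I x l] :\ P| by rewrite card_lineD1.
move: (dom_by_w _ X1l) (dom_by_w _ X2l) X12.
rewrite !inE in X1l X2l; case/andP: X1l => _ X1l; case/andP: X2l => _ X2l.
case: w => [Y|n]; rewrite /dominates /= ?orbF.
  by move=> /andP[_ /eqP[<-]] /andP[_ /eqP[<-]]; rewrite eqxx.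
move=> /andP[nD X1n] /andP[_ X2n]; have nl : n != l by apply: contraNneq lD => <-.
by rewrite (point_uniq nl X1n X1l X2n X2l) eqxx.
Qed.

Lemma extra_line_of_missing_pt Q :
  Q \in S -> inl Q \notin D -> exists2 n, w = inr n & (w \in D) && I Q n.
Proof.
move=> QS QD; have /andP[QP Qell] : (Q != P) && I Q ell by rewrite !inE in QS.
have [[Y|n] uD uQ] := dominatingP domD (inl Q); move: uQ; rewrite /dominates /= ?orbF.
  by move/eqP=> [YQ]; move: QD; rewrite -YQ uD.
move=> Qn; have /setU1P[nw|nSL] := subsetP sDw _ uD; first by exists n; rewrite -?nw ?uD.
move: nSL; rewrite inr_vset !inE => /andP[nell Pn].
by move: Qn; rewrite (negbTE (off_pencil QP Qell Pn nell)).
Qed.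

End ExtendedDominatingSet.

Lemma pts_sub_dominating_ell_ext (D : {set Pt + Ln}) :
  0 < q -> D \subset inr ell |: vset S L -> dominating I D -> S \subset pts_of D.
Proof.
move=> q_gt0 sD domD; apply/subsetP => Q QS; rewrite inE; apply: contraT => QD.
have /andP[QP Qell] : (Q != P) && I Q ell by rewrite !inE in QS.
have /card_gt0P[n nQ] : 0 < #|pencil I Q :\ ell| by rewrite card_pencilD1.
have /andP[nell Qn] : (n != ell) && I Q n by rewrite !inE in nQ.
have nD : inr n \notin D.
  apply/negP => /(subsetP sD) /setU1P[[/eqP]|]; first by rewrite (negbTE nell).
  rewrite inr_vset !inE => /andP[_ Pn].
  by move: Qn; rewrite (negbTE (off_pencil QP Qell Pn nell)).
have [[Y|m] uD] := dominatingP domD (inr n); rewrite /dominates /= ?orbF; last first.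
  by move/eqP=> [mn]; move: nD; rewrite -mn uD.
move=> Yn; have /setU1P[//|] := subsetP sD _ uD; rewrite inl_vset !inE => /andP[_ Yell].
have YQ : Y = Q by exact: point_uniq nell Yn Yell Qn Qell.
by move: QD; rewrite -YQ uD.
Qed.

Lemma leq_card_dominating_ext w (D : {set Pt + Ln}) :
  1 < q -> w \notin vset S L -> D \subset w |: vset S L -> dominating I D ->
  #|vset S L| <= #|D|.
Proof.
move=> q_gt1 wSL sD domD; have LD := pencil_sub_dominating_ext sD domD q_gt1.
case: (boolP (S \subset pts_of D)) => [SD|/subsetPn[Q QS]].
  by apply: subset_leq_card; rewrite -(vset_pts_lns D) vsetS.
rewrite inE => QD; have /andP[_ Qell] : (Q != P) && I Q ell by rewrite !inE in QS.
have [n wn /andP[wD Qn]] := extra_line_of_missing_pt sD domD QS QD.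
have SQD : S :\ Q \subset pts_of D.
  apply/subsetP => Q'; rewrite in_setD1 => /andP[Q'Q Q'S]; rewrite inE.
  apply: contraT => Q'D; have /andP[_ Q'ell] : (Q' != P) && I Q' ell by rewrite !inE in Q'S.
  have [n' wn' /andP[_ Q'n']] := extra_line_of_missing_pt sD domD Q'S Q'D.
  move: wn'; rewrite wn => -[nn']; rewrite -nn' in Q'n'.
  have nell : n = ell by exact: line_uniq Q'Q Q'n' Qn Q'ell Qell.
  rewrite wn nell in sD.
  have := subsetP (pts_sub_dominating_ell_ext (ltnW q_gt1) sD domD) Q QS.
  by rewrite inE (negbTE QD).
have /subset_leq_card : w |: vset (S :\ Q) L \subset D.
  by rewrite subUset sub1set wD -(vset_pts_lns D) vsetS.
rewrite cardsU1 card_vset; have -> : w \notin vset (S :\ Q) L.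
  by apply: contra wSL; apply/subsetP; rewrite vsetS ?subsetDl.
by rewrite card_vset (cardsD1 Q S) QS.
Qed.

End Pencil.
End ProjectivePlane.

Theorem lemma1 (Pt Ln : finType) (I : Pt -> Ln -> bool) (q : nat)
  (D : {set Pt + Ln}) (P : Pt) (ell : Ln) :
  projective_plane I q ->
  minimal_dominating I D ->
  #|D| < 3 * q - 1 ->
  #|pencil I P :&: lns_of D| = q ->
  ell \in pencil I P :\: lns_of D ->
  [/\ lns_of D = pencil I P :\ ell,
      pts_of D = [set p | I p ell] :\ P,
      #|D| = 2 * q
    & stable_dominating I D].
Proof.
move=> pp minD ltD cardPD /setDP[ellP ellD]; have domD := minD.1.
have P_ell : I P ell by rewrite inE in ellP.
rewrite inE in ellD.
have LD : pencil I P :\ ell \subset lns_of D.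
  suff <- : pencil I P :&: lns_of D = pencil I P :\ ell by apply: subsetIr.
  apply/eqP; rewrite eqEcard cardPD (card_pencilD1 pp) // leqnn andbT.
  apply/subsetP => l; rewrite !inE => /andP[Pl lD]; rewrite Pl andbT.
  by apply: contraTneq lD => ->.
have q_gt0 : 0 < q by lia.
have SD : [set p | I p ell] :\ P \subset pts_of D.
  apply/subsetP => Q QS; rewrite inE; apply: contraT => QD.
  by have := leq_card_dominating_missing_pt pp P_ell domD ellD LD QS QD; lia.
have DE : vset ([set p | I p ell] :\ P) (pencil I P :\ ell) = D.
  apply: minimal_dominating_eq minD _ (vset_dominating pp P_ell q_gt0).
  by rewrite -(vset_pts_lns D) vsetS.
have cardD : #|D| = 2 * q.
  by rewrite -DE card_vset (card_lineD1 pp) ?(card_pencilD1 pp) //; lia.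
have q_gt1 : 1 < q by lia.
rewrite -DE in minD cardD *; split; rewrite ?pts_of_vset ?lns_of_vset //.
apply: (stable_dominating_ext minD) => w D'' wD sD domD''.
exact: (leq_card_dominating_ext pp P_ell q_gt1 wD sD domD'').
Qed.
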